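(* Let $(G,\sigma)$ be a signed graph and $S\subseteq V(G)$. Then $S$ is $s$-redundant if and only if for every $z\in S$ and every $x,y\in N(z)\setminus S$ with $xy\notin E(G)$, there exists $w\in V(G)\setminus S$ such that $x w y z$ is a balanced $4$-cycle of $(G,\sigma)$.
   Context: A signed graph $(G,\sigma)$ is a simple loopless undirected graph with a signature $\sigma:E(G)\to\{+1,-1\}$. Switching a vertex negates the signs of its incident edges; two signatures are equivalent if one is obtained from the other by switching a set of vertices. A path or cycle is balanced if the product of the signs of its edges is $+1$ and unbalanced otherwise; $UP_3$ denotes an unbalanced path on $3$ vertices. $N(z)$ is the neighbourhood of $z$. A set $S\subseteq V(G)$ is $s$-redundant if for all $x,y\in V(G)\setminus S$ with $xy\notin E(G)$, every $z\in S$ and every signature $\sigma'$ equivalent to $\sigma$: if $xzy$ is a $UP_3$ in $(G,\sigma')$, then there exists $w\in V(G)\setminus S$ such that $xwy$ is a $UP_3$ in $(G,\sigma')$. *)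

From mathcomp Require Import all_boot.
Set Implicit Arguments. Unset Strict Implicit. Unset Printing Implicit Defensive.

(* A signed graph on a finite vertex type T:
   - adj : rel T is the (symmetric, irreflexive) adjacency relation of a simple
     loopless graph G;
   - sigma : T -> T -> bool is the signature, encoded by
     sigma x y = true  <->  the edge xy has sign -1,
     sigma x y = false <->  the edge xy has sign +1.
     It is required to be symmetric; its values on non-edges are irrelevant.
   The product of signs along a path/cycle is then the xor ([addb]) of the
   encodings: the product is -1 iff the xor is true. *)

Definition simple_graph (T : finType) (adj : rel T) : Prop :=
  symmetric adj /\ irreflexive adj.

Definition signature_on (T : finType) (sigma : T -> T -> bool) : Prop :=
  forall x y, sigma x y = sigma y x.

(* Switching the vertex set X: an edge xy changes sign iff exactly one of its
   endpoints is in X (switching each vertex of X negates its incident edges). *)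
Definition switch (T : finType) (X : {set T}) (sigma : T -> T -> bool) :
  T -> T -> bool :=
  fun x y => sigma x y (+) (x \in X) (+) (y \in X).

(* Signatures equivalent to sigma are exactly those (on the edges) of the form
   switch X sigma. *)

Definition UP3 (T : finType) (adj : rel T) (sigma' : T -> T -> bool)
  (x z y : T) : Prop :=
  [/\ uniq [:: x; z; y], adj x z, adj z y & sigma' x z (+) sigma' z y].

Definition balanced_C4 (T : finType) (adj : rel T) (sigma : T -> T -> bool)
  (x w y z : T) : Prop :=
  [/\ uniq [:: x; w; y; z], [&& adj x w, adj w y, adj y z & adj z x] &
      ~~ (sigma x w (+) sigma w y (+) sigma y z (+) sigma z x)].

Definition s_redundant (T : finType) (adj : rel T) (sigma : T -> T -> bool)
  (S : {set T}) : Prop :=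
  forall x y, x \notin S -> y \notin S -> x != y -> ~~ adj x y ->
  forall z, z \in S ->
  forall X : {set T},
    UP3 adj (switch X sigma) x z y ->
    exists w, w \notin S /\ UP3 adj (switch X sigma) x w y.

From mathcomp Require Import all_boot.
Set Implicit Arguments. Unset Strict Implicit. Unset Printing Implicit Defensive.

(* Switching X changes the sign of a path only through its endpoints, so the
   sign of the 4-cycle x w y z, which is the product of the signs of the two
   paths x z y and x w y, is invariant under switching. Hence x z y and x w y
   are both unbalanced in a switched signature exactly when the 4-cycle is
   balanced, and since x != y one switching makes x z y unbalanced. *)

Definition path2_sign {T : Type} (sigma : T -> T -> bool) (x z y : T) : bool :=
  sigma x z (+) sigma z y.

Lemma uniq4_path3 (T : eqType) (x w y z : T) :
  uniq [:: x; w; y; z] = [&& uniq [:: x; z; y], uniq [:: x; w; y] & w != z].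
Proof.
rewrite /= !inE !negb_or !andbT (eq_sym y z).
by case: (x == w); case: (x == y); case: (x == z); case: (w == y); case: (w == z);
  case: (z == y).
Qed.

Section Switching.

Variables (T : finType) (sigma : T -> T -> bool).

Lemma path2_sign_switch (X : {set T}) (x z y : T) :
  path2_sign (switch X sigma) x z y =
  path2_sign sigma x z y (+) (x \in X) (+) (y \in X).
Proof.
rewrite /path2_sign /switch.
by case: (sigma x z); case: (sigma z y); case: (x \in X); case: (z \in X);
  case: (y \in X).
Qed.

Lemma exists_switch_path2_unbalanced (x z y : T) :
  x != y -> exists X : {set T}, path2_sign (switch X sigma) x z y.
Proof.
move=> xy; exists (if path2_sign sigma x z y then set0 else [set x]).
rewrite path2_sign_switch; case: path2_sign; first by rewrite !inE.
by rewrite !inE eqxx eq_sym (negbTE xy).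
Qed.

Hypothesis sigma_sym : signature_on sigma.

Lemma C4_sign_switch (X : {set T}) (x w y z : T) :
  sigma x w (+) sigma w y (+) sigma y z (+) sigma z x =
  path2_sign (switch X sigma) x z y (+) path2_sign (switch X sigma) x w y.
Proof.
rewrite !path2_sign_switch /path2_sign (sigma_sym y z) (sigma_sym z x).
by case: (sigma x w); case: (sigma w y); case: (sigma x z); case: (sigma z y);
  case: (x \in X); case: (y \in X).
Qed.

Variable adj : rel T.
Hypothesis adj_sym : symmetric adj.

Lemma balanced_C4_UP3 (X : {set T}) (x w y z : T) :
  w != z -> UP3 adj (switch X sigma) x z y ->
  balanced_C4 adj sigma x w y z <-> UP3 adj (switch X sigma) x w y.
Proof.
move=> wz [uxzy axz azy sxzy]; rewrite /balanced_C4 uniq4_path3 uxzy wz andbT.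
rewrite (adj_sym z x) axz (adj_sym y z) azy !andbT (C4_sign_switch X).
have -> : path2_sign (switch X sigma) x z y := sxzy.
split=> [[uxwy /andP[axw awy] sxwy] | [uxwy axw awy sxwy]]; split=> //.
- by rewrite negbK in sxwy.
- by rewrite axw.
- by rewrite /path2_sign sxwy.
Qed.

End Switching.

Theorem proposition5p2 (T : finType) (adj : rel T) (sigma : T -> T -> bool)
  (S : {set T}) :
  simple_graph adj -> signature_on sigma ->
  s_redundant adj sigma S <->
  (forall z, z \in S -> forall x y, adj z x -> adj z y ->
     x \notin S -> y \notin S -> x != y -> ~~ adj x y ->
     exists w, w \notin S /\ balanced_C4 adj sigma x w y z).
Proof.
move=> [adj_sym adj_irr] sigma_sym.
have neq_of_S z w : z \in S -> w \notin S -> w != z.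
  by move=> zS; apply: contraNneq => ->.
split=> [redS z zS x y azx azy xS yS xy nxy | C4S x y xS yS xy nxy z zS X Uxzy].
- have [X sxzy] := exists_switch_path2_unbalanced sigma z xy.
  have neq_of_adj u v : adj u v -> u != v by apply: contraTneq => ->; rewrite adj_irr.
  have Uxzy : UP3 adj (switch X sigma) x z y.
    split=> //; last by rewrite adj_sym.
    by rewrite /= !inE negb_or xy eq_sym !neq_of_adj.
  have [w [wS Uxwy]] := redS x y xS yS xy nxy z zS X Uxzy.
  exists w; split=> //.
  exact/(balanced_C4_UP3 sigma_sym adj_sym (neq_of_S _ _ zS wS) Uxzy).
- have [_ axz azy _] := Uxzy.
  have [w [wS C4]] := C4S z zS x y (etrans (adj_sym z x) axz) azy xS yS xy nxy.
  exists w; split=> //.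
  exact/(balanced_C4_UP3 sigma_sym adj_sym (neq_of_S _ _ zS wS) Uxzy).
Qed.
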